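(* Let $D=D_1\times\cdots\times D_s$ where each $D_i$ is a finite dihedral group with a cyclic subgroup $T_i$ of index $2$, and let $T=T_1\times\cdots\times T_s$ (so $|D:T|=2^s$). For any subgroup $L$ of $T$, the number of subgroups $H$ of $D$ with $H\cap T=L$ is at most $|D|^8\,2^{2s^2}$. *)

From mathcomp Require Import all_boot all_fingroup all_solvable.
Set Implicit Arguments. Unset Strict Implicit. Unset Printing Implicit Defensive.
Import GroupScope.
Local Open Scope group_scope.

(* This includes the degenerate dihedral groups of order 2 (T = 1) and 4
   (Klein four group, T of order 2). *)
Definition dihedral_with (gT : finGroupType) (D T : {set gT}) : Prop :=
  [/\ T \subset D, cyclic T, #|D : T| = 2 &
      exists2 x, x \in D :\: T & (x ^+ 2 = 1 /\ forall t, t \in T -> t ^ x = t^-1)].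

(* Call a subgroup H of D admissible when H :&: T = L, and let W(H) be the
   group of elements of T that centralise H modulo L.  Admissible overgroups of
   an admissible H0 are reached by one-step extensions <<h |: H0>>, with h in
   a coset Y of T, and each step at least doubles #|H0 : L|.  Fix an extension
   generated by h in Y.  Any other extension inside Y is generated by h * v for
   v in V = {v in W(H0) | v ^ h * v \in L}, and accounts for at least #|L| such
   v.  All these extensions have their W-group inside W(h |: H0), and
   V :&: W(h |: H0) consists of square roots of elements of L, of which there
   are at most #|L| * #|'Ldiv_2(T)|.  So the W-weights of the extensions in one
   coset add up to at most #|'Ldiv_2(T)| * #|W(H0)|, and induction on the
   number of steps bounds the admissible subgroups by
   #|T| * (2 * #|D : T| * #|'Ldiv_2(T)|) ^ k whenever #|D : T| <= 2 ^ k.  For a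
   product of s dihedral groups T is abelian, D / T has exponent 2,
   #|D : T| = 2 ^ s and #|'Ldiv_2(T)| <= 2 ^ s. *)

From mathcomp Require Import all_boot all_fingroup all_solvable.
From mathcomp Require Import zify.
Import GroupScope.

Set Implicit Arguments.
Unset Strict Implicit.
Unset Printing Implicit Defensive.
Local Open Scope group_scope.

Lemma card_bigcup_le (I U : finType) (A : {pred I}) (F : I -> {set U}) :
  #|\bigcup_(i in A) F i| <= \sum_(i in A) #|F i|.
Proof.
elim/big_rec2: _ => [|i n X _ IH]; first by rewrite cards0.
by rewrite (leq_trans (leq_card_setU _ _)) // leq_add2l.
Qed.

Section OvergroupsOverAbelianSubgroup.

Variables (gT : finGroupType) (D T L : {group gT}).
Hypotheses (sTD : T \subset D) (cTT : abelian T)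
  (sqrTD : {in D, forall d, d ^+ 2 \in T}) (sLT : L \subset T).
Implicit Types (A B : {set gT}) (H : {group gT}).

Lemma commg_in d e : d \in D -> e \in D -> [~ d, e] \in T.
Proof.
move=> Dd De; have -> : [~ d, e] = (d ^+ 2)^-1 * (d * e^-1) ^+ 2 * e ^+ 2.
  by rewrite /commg !expgS !expg0 !mulg1 !invMg !mulgA !mulgKV.
have De' : d * e^-1 \in D by rewrite groupM ?groupV.
by apply: groupM; [apply: groupM; rewrite ?groupV |]; apply: sqrTD.
Qed.

Lemma conjg_in t d : t \in T -> d \in D -> t ^ d \in T.
Proof.
move=> Tt Dd; rewrite -(mulKVg t (t ^ d)) -commgEl.
by rewrite groupM // commg_in // (subsetP sTD).
Qed.

Lemma conjg_abelian t v : t \in T -> v \in T -> t ^ v = t.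
Proof. by move=> Tt Tv; rewrite conjgE -(centsP cTT _ Tv _ Tt) mulKg. Qed.

Lemma commgMT t d v : t \in T -> d \in D -> v \in T -> [~ t, d * v] = [~ t, d].
Proof.
move=> Tt Dd Tv; rewrite commgMJ conjg_abelian ?commg_in // ?(subsetP sTD) //.
by have /commgP/eqP-> : commute t v := centsP cTT t Tt v Tv; rewrite mul1g.
Qed.

Definition cent_mod (A : {set gT}) :=
  [set t in T | [forall a in A, [~ t, a] \in L]].

Lemma cent_modP A t :
  reflect (t \in T /\ {in A, forall a, [~ t, a] \in L}) (t \in cent_mod A).
Proof. by rewrite inE; apply: (iffP andP) => -[Tt cAt]; split=> //; apply/forall_inP. Qed.

Fact cent_mod_group_set A : group_set (cent_mod A).
Proof.
apply/group_setP; split=> [|x y].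
  by apply/cent_modP; split=> // a _; rewrite comm1g group1.
move=> /cent_modP[Tx Lx] /cent_modP[Ty Ly]; apply/cent_modP.
split=> [|a Aa]; first exact: groupM.
have Txa : [~ x, a] \in T := subsetP sLT _ (Lx a Aa).
by rewrite commMgJ conjg_abelian // groupM ?Lx ?Ly.
Qed.
Canonical cent_mod_group A := Group (cent_mod_group_set A).

Lemma cent_mod_sub A : cent_mod A \subset T.
Proof. by apply/subsetP=> t /cent_modP[]. Qed.

Lemma cent_modS A B : A \subset B -> cent_mod B \subset cent_mod A.
Proof.
move=> sAB; apply/subsetP=> t /cent_modP[Tt cBt].
by apply/cent_modP; split=> // a /(subsetP sAB)/cBt.
Qed.

Definition trace_mod (A : {set gT}) h := [set v in cent_mod A | v ^ h * v \in L].

Fact trace_mod_group_set A h : h \in D -> group_set (trace_mod A h).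
Proof.
move=> Dh; apply/group_setP; split=> [|x y].
  by rewrite inE group1 conj1g mulg1 group1.
move=> /setIdP[Wx Lx] /setIdP[Wy Ly].
have [Tx Ty] := (subsetP (cent_mod_sub A) x Wx, subsetP (cent_mod_sub A) y Wy).
rewrite inE groupM //= conjMg.
have: y ^ h \in T := conjg_in Ty Dh; move: (x ^ h) (y ^ h) Lx Ly => xh yh Lx Ly Tyh.
by rewrite -mulgA (mulgA yh) (centsP cTT _ Tyh _ Tx) -!mulgA (mulgA xh) groupM.
Qed.

Definition sqrt_mod := [set v in T | v ^+ 2 \in L].

Lemma card_trace_cent_mod A h : h \in D ->
  #|trace_mod A h| * #|cent_mod (h |: A)| <= #|cent_mod A| * #|sqrt_mod|.
Proof.
move=> Dh; pose V := Group (trace_mod_group_set A Dh).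
have sVW : V \subset cent_mod A by apply/subsetP=> v /setIdP[].
rewrite -[trace_mod A h]/(gval V) mul_cardG leq_mul // subset_leq_card //.
  by rewrite mul_subG // cent_modS // subsetUr.
apply/subsetP=> v /setIP[/setIdP[Wv Lv] /cent_modP[Tv Lvh]].
have Lc := Lvh h (setU11 h A); rewrite inE Tv /=.
have -> : v ^+ 2 = (v ^ h * v) * [~ v, h]^-1.
  rewrite commgEl invMg invgK (centsP cTT _ (conjg_in Tv Dh) _ Tv) mulgA mulgK.
  by rewrite expgS expg1.
by rewrite groupM ?groupV.
Qed.

Lemma card_sqrt_fiber l : #|[set v in T | v ^+ 2 == l]| <= #|'Ldiv_2(T)|.
Proof.
have [-> | [v0]] := set_0Vmem [set v in T | v ^+ 2 == l]; first by rewrite cards0.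
rewrite inE => /andP[Tv0 /eqP v0l].
rewrite -(card_imset _ (mulgI v0^-1)); apply/subset_leq_card/subsetP.
move=> _ /imsetP[v /setIdP[Tv /eqP vl] ->]; apply/LdivP; split.
  by rewrite groupM ?groupV.
by rewrite expgMn ?expVgn ?v0l ?vl ?mulVg //; apply: (centsP cTT); rewrite ?groupV.
Qed.

Lemma card_sqrt_mod : #|sqrt_mod| <= #|L| * #|'Ldiv_2(T)|.
Proof.
have cover : sqrt_mod \subset \bigcup_(l in L) [set v in T | v ^+ 2 == l].
  apply/subsetP=> v /setIdP[Tv Lv2]; apply/bigcupP; exists (v ^+ 2) => //.
  by rewrite inE Tv eqxx.
rewrite (leq_trans (subset_leq_card cover)) // (leq_trans (card_bigcup_le _ _)) //.
by rewrite -sum_nat_const leq_sum // => l _; apply: card_sqrt_fiber.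
Qed.

Lemma mem_trace_mod A (K H : {group gT}) h v :
    K \subset D -> K :&: T \subset L -> H :&: T \subset L ->
    A \subset K -> A \subset H -> h \in K -> h * v \in H -> v \in T ->
  v \in trace_mod A h.
Proof.
move=> sKD tiKT tiHT sAK sAH Kh Hhv Tv.
have inL (X : {group gT}) x : X :&: T \subset L -> x \in X -> x \in T -> x \in L.
  by move=> tiXT Xx Tx; rewrite (subsetP tiXT) // inE Xx.
have Dh : h \in D := subsetP sKD h Kh.
have Dhv : h * v \in D by rewrite groupM // (subsetP sTD).
rewrite inE; apply/andP; split.
  apply/cent_modP; split=> // a Aa.
  have [Ka Ha] := (subsetP sAK a Aa, subsetP sAH a Aa).
  have Da : a \in D := subsetP sKD a Ka.
  have Lha : [~ h, a] \in L by apply: (inL K); [| exact: groupR | exact: commg_in].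
  have : [~ h * v, a] \in L by apply: (inL H); [| exact: groupR | exact: commg_in].
  have Tha : [~ h, a] \in T := subsetP sLT _ Lha.
  by rewrite commMgJ conjg_abelian // groupMl.
have Lh2 : h ^+ 2 \in L by apply: (inL K); [| exact: groupX | exact: sqrTD].
have : (h * v) ^+ 2 \in L by apply: (inL H); [| exact: groupX | exact: sqrTD].
have -> : (h * v) ^+ 2 = h ^+ 2 * (v ^ h * v).
  by rewrite !expgS !expg0 !mulg1 conjgE !mulgA mulgK.
by rewrite groupMl.
Qed.

Definition overgroups (H0 : {set gT}) :=
  [set H : {group gT} | [&& H \subset D, H :&: T == L & H0 \subset H]].

Lemma overgroupsP H0 H :
  reflect [/\ H \subset D, H :&: T = L & H0 \subset H] (H \in overgroups H0).
Proof. by rewrite inE; apply: (iffP and3P) => -[sHD /eqP tiHT sH0H]. Qed.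

Lemma overgroups_index H0 H : H \in overgroups H0 -> #|H : L| <= #|D : T|.
Proof.
case/overgroupsP=> sHD tiHT _; rewrite -tiHT indexgI.
exact/subset_leq_card/imsetS.
Qed.

Definition step_overgroups (H0 Y : {set gT}) :=
  [set H in overgroups H0 | [exists h in Y :\: H0, H :==: <<h |: H0>>]].

Lemma step_overgroupsP H0 Y H :
  reflect (H \in overgroups H0 /\ exists2 h, h \in Y :\: H0 & H :=: <<h |: H0>>)
          (H \in step_overgroups H0 Y).
Proof.
apply: (iffP setIdP) => -[oH defH]; split=> //.
  by have /exists_inP[h Yh /eqP] := defH; exists h.
by have [h Yh eqH] := defH; apply/exists_inP; exists h; rewrite ?eqH.
Qed.

Lemma lcosets_memE Y y : Y \in lcosets T D -> y \in Y -> y \in D /\ Y = y *: T.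
Proof.
case/lcosetsP=> x Dx -> xTy; split; last by rewrite (lcoset_eqP xTy).
by rewrite -(mulKVg x y) groupM // (subsetP sTD) // -mem_lcoset.
Qed.

Lemma step_overgroup_gen H0 Y H x : L \subset H0 -> Y \in lcosets T D ->
  H \in step_overgroups H0 Y -> x \in H -> x \in Y -> H :=: <<x |: H0>>.
Proof.
move=> sLH0 cosY /step_overgroupsP[/overgroupsP[_ tiHT sH0H] [h /setDP[Yh _] defH]].
move=> Hx Yx; have [_ defY] := lcosets_memE cosY Yx.
have Hh : h \in H by rewrite defH mem_gen ?setU11.
have sH0X : H0 \subset <<x |: H0>> := subset_trans (subsetUr _ _) (subset_gen _).
have Lxh : x^-1 * h \in L by rewrite -tiHT inE groupM ?groupV //= -mem_lcoset -defY.
apply/eqP; rewrite eqEsubset gen_subG subUset sub1set Hx sH0H andbT.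
rewrite defH gen_subG subUset sH0X sub1set andbT -(mulKVg x h).
by rewrite groupM ?mem_gen ?setU11 // setU1r // (subsetP sLH0).
Qed.

Lemma cent_mod_step H0 Y H h : Y \in lcosets T D -> H \in step_overgroups H0 Y ->
  h \in Y -> cent_mod H \subset cent_mod (h |: H0).
Proof.
move=> cosY /step_overgroupsP[/overgroupsP[_ _ sH0H] [h1 /setDP[Yh1 _] defH]] Yh.
have [Dh defY] := lcosets_memE cosY Yh.
have Hh1 : h1 \in H by rewrite defH mem_gen ?setU11.
have Tv : h^-1 * h1 \in T by rewrite -mem_lcoset -defY.
apply/subsetP=> t /cent_modP[Tt cHt]; apply/cent_modP; split=> // a.
case/setU1P=> [-> | H0a]; last exact/cHt/(subsetP sH0H).
by rewrite -(commgMT Tt Dh Tv) mulKVg cHt.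
Qed.

(* Each element of [H :&: Y] generates [H] over [H0] (step_overgroup_gen), so
   the map (H, l) |-> h^-1 * (repr (H :&: Y) * l) below is injective. *)
Lemma card_step_overgroups H0 Y K h : L \subset H0 -> Y \in lcosets T D ->
    K \in step_overgroups H0 Y -> h \in K -> h \in Y ->
  #|step_overgroups H0 Y| * #|L| <= #|trace_mod H0 h|.
Proof.
move=> sLH0 cosY stepK Kh Yh.
have /step_overgroupsP[/overgroupsP[sKD tiKT sH0K] _] := stepK.
have [_ defY] := lcosets_memE cosY Yh.
have repr_in H : H \in step_overgroups H0 Y -> repr (H :&: Y) \in H :&: Y.
  case/step_overgroupsP=> _ [x /setDP[Yx _] defH]; apply: (mem_repr x).
  by rewrite inE Yx andbT defH mem_gen ?setU11.
have reprM_in H l :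
    H \in step_overgroups H0 Y -> l \in L -> repr (H :&: Y) * l \in H :&: Y.
  move=> stepH Ll; have /setIP[Hx Yx] := repr_in H stepH.
  set x := repr (H :&: Y) in Hx Yx *.
  have /step_overgroupsP[/overgroupsP[_ _ sH0H] _] := stepH.
  have [_ ->] := lcosets_memE cosY Yx.
  rewrite inE mem_lcoset mulKg (subsetP sLT) // andbT.
  by rewrite groupM // (subsetP sH0H) // (subsetP sLH0).
pose f (p : {group gT} * gT) := h^-1 * (repr (p.1 :&: Y) * p.2).
rewrite -cardsX -(card_in_imset (f := f)).
  apply/subset_leq_card/subsetP=> _ /imsetP[[H l] /setXP[stepH Ll] ->].
  have /setIP[Hx Yx] := reprM_in H l stepH Ll.
  have /step_overgroupsP[/overgroupsP[sHD tiHT sH0H] _] := stepH.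
  apply: (mem_trace_mod sKD _ _ sH0K sH0H Kh); rewrite ?tiKT ?tiHT ?mulKVg //.
  by rewrite -mem_lcoset -defY.
move=> [H1 l1] [H2 l2] /setXP[step1 Ll1] /setXP[step2 Ll2] /mulgI /= eq12.
have /setIP[H1z Yz] := reprM_in H1 l1 step1 Ll1.
have /setIP[H2z _] := reprM_in H2 l2 step2 Ll2.
rewrite -eq12 in H2z.
have eqH : H1 = H2.
  apply: val_inj; rewrite /= (step_overgroup_gen sLH0 cosY step1 H1z Yz).
  by rewrite (step_overgroup_gen sLH0 cosY step2 H2z Yz).
by move: eq12; rewrite eqH => /mulgI->.
Qed.

Lemma sum_cent_mod_step H0 Y : L \subset H0 -> Y \in lcosets T D ->
  \sum_(H in step_overgroups H0 Y) #|cent_mod H| <= #|'Ldiv_2(T)| * #|cent_mod H0|.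
Proof.
move=> sLH0 cosY.
have [-> | [K stepK]] := set_0Vmem (step_overgroups H0 Y); first by rewrite big_set0.
have /step_overgroupsP[_ [h /setDP[Yh _] defK]] := stepK.
have Kh : h \in K by rewrite defK mem_gen ?setU11.
have [Dh _] := lcosets_memE cosY Yh.
rewrite -(leq_pmul2r (cardG_gt0 L)).
apply: leq_trans (_ : #|step_overgroups H0 Y| * #|cent_mod (h |: H0)| * #|L| <= _).
  rewrite leq_mul2r -sum_nat_const leq_sum ?orbT // => H stepH.
  exact/subset_leq_card/(cent_mod_step cosY stepH Yh).
have cardV := card_step_overgroups sLH0 cosY stepK Kh Yh.
rewrite mulnAC (leq_trans (leq_mul cardV (leqnn _))) //.
rewrite (leq_trans (card_trace_cent_mod H0 Dh)) // (mulnC #|'Ldiv_2(T)|) -mulnA leq_mul2l.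
by rewrite (leq_trans card_sqrt_mod) ?orbT // mulnC.
Qed.

Lemma overgroups_cover H0 : H0 \subset D -> H0 :&: T = L ->
  overgroups H0 \subset
    H0 |: \bigcup_(Y in lcosets T D) \bigcup_(H in step_overgroups H0 Y) overgroups H.
Proof.
move=> sH0D tiH0T; apply/subsetP=> H oH; have /overgroupsP[sHD tiHT sH0H] := oH.
have [-> | neH] := eqVneq H H0; first exact: setU11.
have /subsetPn[h Hh H0'h] : ~~ (H \subset H0).
  by apply: contraNN neH => sHH0; apply/eqP/val_inj/eqP; rewrite eqEsubset sHH0.
have sLH0 : L \subset H0 by rewrite -tiH0T subsetIl.
have sH0X : H0 \subset <<h |: H0>> := subset_trans (subsetUr _ _) (subset_gen _).
have sXH : <<h |: H0>> \subset H by rewrite gen_subG subUset sub1set Hh.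
apply/setU1r/bigcupP; exists (h *: T).
  by apply/lcosetsP; exists h; rewrite ?(subsetP sHD).
apply/bigcupP; exists <<h |: H0>>%G; last exact/overgroupsP.
apply/step_overgroupsP; split; last by exists h; rewrite // inE H0'h lcoset_refl.
apply/overgroupsP; split=> //; first exact: subset_trans sXH sHD.
apply/eqP; rewrite eqEsubset -{1}tiHT setSI //= subsetI sLT andbT.
exact: subset_trans sLH0 sH0X.
Qed.

Lemma overgroups_sub1 H0 : L \subset H0 -> #|D : T| <= #|H0 : L| ->
  overgroups H0 \subset [set H0].
Proof.
move=> sLH0 leDH0; apply/subsetP=> H oH; have /overgroupsP[_ _ sH0H] := oH.
have : #|H : H0| == 1%N.
  rewrite eqn_leq indexg_gt0 andbT -(leq_pmul2r (indexg_gt0 H0 L)) mul1n.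
  by rewrite (Lagrange_index sH0H sLH0) (leq_trans (overgroups_index oH)).
rewrite indexg_eq1 inE => sHH0; apply/eqP/val_inj/eqP.
by rewrite eqEsubset sHH0.
Qed.

Lemma index_step_overgroups H0 Y H : L \subset H0 ->
  H \in step_overgroups H0 Y -> 2 * #|H0 : L| <= #|H : L|.
Proof.
move=> sLH0 /step_overgroupsP[/overgroupsP[_ _ sH0H] [h /setDP[_ H0'h] defH]].
rewrite -(Lagrange_index sH0H sLH0) leq_mul2r indexg_gt1; apply/orP; right.
by apply: contra H0'h => /subsetP->; rewrite // defH mem_gen ?setU11.
Qed.

(* [k] bounds the number of one-step extensions still possible: each of them
   at least doubles [#|H0 : L|], which never exceeds [#|D : T|]. *)
Lemma card_overgroups k H0 : H0 \subset D -> H0 :&: T = L ->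
    #|D : T| <= 2 ^ k * #|H0 : L| ->
  #|overgroups H0| <= #|cent_mod H0| * (2 * #|D : T| * #|'Ldiv_2(T)|) ^ k.
Proof.
set q := (2 * _ * _)%N; elim: k H0 => [|k IHk] H0 sH0D tiH0T leDk;
  have sLH0 : L \subset H0 by rewrite -tiH0T subsetIl.
  rewrite mul1n in leDk; have := subset_leq_card (overgroups_sub1 sLH0 leDk).
  by rewrite cards1 muln1 => /leq_trans->.
have sum_step : \sum_(Y in lcosets T D)
      #|\bigcup_(H in step_overgroups H0 Y) overgroups H|
    <= #|D : T| * (#|'Ldiv_2(T)| * #|cent_mod H0| * q ^ k).
  rewrite -card_lcosets -sum_nat_const leq_sum // => Y cosY.
  apply: leq_trans (card_bigcup_le _ _) _.
  apply: leq_trans (_ : _ <= \sum_(H in step_overgroups H0 Y) #|cent_mod H| * q ^ k) _.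
    apply: leq_sum => H stepH.
    have /step_overgroupsP[/overgroupsP[sHD tiHT _] _] := stepH.
    apply: IHk => //; apply: leq_trans leDk _.
    by rewrite expnSr -mulnA leq_mul2l (index_step_overgroups sLH0 stepH) orbT.
  by rewrite -big_distrl leq_mul2r sum_cent_mod_step ?orbT.
apply: leq_trans (subset_leq_card (overgroups_cover sH0D tiH0T)) _.
apply: leq_trans (leq_card_setU _ _) _; rewrite cards1.
apply: leq_trans (leq_add (leqnn 1) (leq_trans (card_bigcup_le _ _) sum_step)) _.
have Ldiv_gt0 : 0 < #|'Ldiv_2(T)|.
  by apply/card_gt0P; exists 1; rewrite !inE group1 expg1n eqxx.
have : 0 < #|D : T| * (#|'Ldiv_2(T)| * #|cent_mod H0| * q ^ k).
  by rewrite !muln_gt0 indexg_gt0 Ldiv_gt0 cardG_gt0 expn_gt0 /q !muln_gt0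
             indexg_gt0 Ldiv_gt0.
by rewrite expnSr /q; lia.
Qed.

Theorem card_subgroups_meet_eq k : #|D : T| <= 2 ^ k ->
  #|[set H : {group gT} | (H \subset D) && (H :&: T == L)]|
    <= #|T| * (2 * #|D : T| * #|'Ldiv_2(T)|) ^ k.
Proof.
move=> leDk.
have -> : [set H : {group gT} | (H \subset D) && (H :&: T == L)] = overgroups L.
  by apply/setP=> H; rewrite !inE; case: eqP => [<- | _]; rewrite ?andbF ?subsetIl ?andbT.
have sLD : L \subset D := subset_trans sLT sTD.
apply: leq_trans (card_overgroups (k := k) sLD (setIidPl sLT) _) _.
  by rewrite indexgg muln1.
by rewrite leq_mul2r subset_leq_card ?cent_mod_sub ?orbT.
Qed.

End OvergroupsOverAbelianSubgroup.

Section BigDirectProduct.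

Variables (gT : finGroupType) (I : finType) (E : I -> {group gT}) (G : {group gT}).
Hypothesis defG : \big[dprod/1]_i E i = G.

Lemma bigdprod_sub i : E i \subset G.
Proof. by rewrite -(bigdprodWY defG) sub_gen // (bigcup_sup i). Qed.

Lemma bigdprod_cent i j : i != j -> E i \subset 'C(E j).
Proof.
have defGcp : \big[cprod/1]_i E i == (\prod_i E i)%G :> {set gT}.
  by rewrite (bigdprodWcp defG) bigprodGE (bigdprodWY defG).
by move=> neq_ij; move/bigcprodYP: defGcp; apply.
Qed.

Lemma bigdprod_commute (c : I -> gT) :
  (forall i, c i \in E i) -> forall i j, commute (c i) (c j).
Proof.
move=> Ec i j; have [-> | neq_ij] := eqVneq i j; first exact: commute_refl.
exact: (centsP (bigdprod_cent neq_ij)).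
Qed.

Lemma expg_bigdprod (c : I -> gT) n :
  (forall i, c i \in E i) -> (\prod_i c i) ^+ n = \prod_i c i ^+ n.
Proof.
move=> Ec; elim: n => [|n IHn]; first by rewrite expg0 big1.
rewrite expgSr IHn -prodgM_commute; first by apply: eq_bigr => i _; rewrite expgSr.
by move=> i j _ _; apply/commute_sym/commuteX/bigdprod_commute.
Qed.

Lemma abelian_bigdprod : (forall i, abelian (E i)) -> abelian G.
Proof.
move=> cEE; rewrite -(bigdprodWY defG) abelian_gen.
apply/bigcupsP=> i _; rewrite centsC; apply/bigcupsP=> j _.
by have [-> | /bigdprod_cent] := eqVneq j i; first exact: cEE.
Qed.

Lemma bigdprod_subgroups (F : I -> {group gT}) :
  (forall i, F i \subset E i) -> \big[dprod/1]_i F i = \prod_i F i.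
Proof.
move=> sFE; have /bigdprodYP dE : \big[dprod/1]_i E i == (\prod_i E i)%G :> {set gT}.
  by rewrite defG bigprodGE (bigdprodWY defG).
have /eqP defF : \big[dprod/1]_i F i == (\prod_i F i)%G :> {set gT}.
  apply/bigdprodYP=> i _; apply: subset_trans (subset_trans _ (dE i isT)) _.
    rewrite !bigprodGE genS //; apply/bigcupsP=> j neq_ji.
    by rewrite (bigcup_max j) // sFE.
  by rewrite setDSS ?centS ?setSD.
by rewrite defF (bigdprodW defF).
Qed.

Lemma card_Ldiv_bigdprod n : #|'Ldiv_n(G)| <= \prod_i #|'Ldiv_n(E i)|.
Proof.
pose prodc (c : {dffun forall i : I, gT}) := \prod_i c i.
rewrite -cardsXn (leq_trans _ (leq_imset_card prodc _)) //.
apply/subset_leq_card/subsetP=> x /LdivP[Gx xn].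
have [c [Ec defx _]] := mem_bigdprod defG Gx.
have [c1 [_ _ uniq1]] := mem_bigdprod defG (group1 G).
have prod_cn : 1 = \prod_i c i ^+ n.
  rewrite -(expg_bigdprod n (fun i => Ec i isT)).
  by move: xn; rewrite defx => /esym xn; exact: xn.
have prod_1 : 1 = \prod_(i : I) (1 : gT) by rewrite big1.
have cn i : c i ^+ n = 1.
  rewrite (uniq1 _ (fun j _ => groupX n (Ec j isT)) prod_cn i isT).
  by rewrite -(uniq1 _ (fun j _ => group1 (E j)) prod_1 i isT).
apply/imsetP; exists (finfun c).
  by apply/setXnP=> i; rewrite ffunE; apply/LdivP; split; [exact: Ec | exact: cn].
by rewrite defx /prodc; apply: eq_bigr => i _; rewrite ffunE.
Qed.

End BigDirectProduct.

Lemma card_Ldiv_cyclic (gT : finGroupType) (G : {group gT}) n :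
  0 < n -> cyclic G -> #|'Ldiv_n(G)| <= n.
Proof.
move=> n_gt0 cycG; pose X := Group (group_Ldiv n (cyclic_abelian cycG)).
have sXG : X \subset G by apply/subsetP=> y; rewrite inE => /andP[].
have /cyclicP[x defX] := cyclicS sXG cycG.
have : x \in X by rewrite defX cycle_id.
rewrite inE => /andP[_]; rewrite inE => /eqP xn.
by rewrite -[#|_|]/#|X| defX -orderE dvdn_leq // order_dvdn xn eqxx.
Qed.

Lemma dihedral_sqr (gT : finGroupType) (D T : {group gT}) :
  dihedral_with D T -> {in D, forall d, d ^+ 2 \in T}.
Proof.
case=> sTD _ iTD [x /setDP[Dx T'x] [x2 invTx]] d Dd.
have [Td | T'd] := boolP (d \in T); first by rewrite groupX.
have /rcosetP[t Tt ->] : d \in T :* x.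
  by rewrite (rcoset_index2 sTD iTD); apply/setDP.
have xV : x^-1 = x by apply/eqP; rewrite eq_invg_mul -x2 expgS expg1.
move: (invTx t Tt); rewrite conjgE xV => txt.
by rewrite expgS expg1 -!mulgA txt mulgV group1.
Qed.

Section DihedralProduct.

Variables (gT : finGroupType) (I : finType) (Di Ti : I -> {group gT}).
Variables (D T : {group gT}).
Hypotheses (dihD : forall i, dihedral_with (Di i) (Ti i))
  (defD : \big[dprod/1]_i Di i = D) (defT : T = \prod_i Ti i :> {set gT}).

Let sTiDi i : Ti i \subset Di i. Proof. by case: (dihD i). Qed.
Let cycTi i : cyclic (Ti i). Proof. by case: (dihD i). Qed.

Lemma dihedral_bigdprodT : \big[dprod/1]_i Ti i = T.
Proof. by rewrite defT; exact: (bigdprod_subgroups defD sTiDi). Qed.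

Lemma dihedral_prod_sub : T \subset D.
Proof.
by rewrite defT; apply: prod_subG => i _; rewrite (subset_trans (sTiDi i)) ?bigdprod_sub.
Qed.

Lemma dihedral_prod_abelian : abelian T.
Proof.
exact: abelian_bigdprod dihedral_bigdprodT (fun i => cyclic_abelian (cycTi i)).
Qed.

Lemma dihedral_prod_sqr : {in D, forall d, d ^+ 2 \in T}.
Proof.
move=> d Dd; have [c [Dc -> _]] := mem_bigdprod defD Dd.
rewrite (expg_bigdprod defD 2 (fun i => Dc i isT)) defT.
by apply: mem_prodg => i _; apply: dihedral_sqr (dihD i) _ (Dc i isT).
Qed.

Lemma dihedral_prod_index : #|D : T| = (2 ^ #|I|)%N.
Proof.
rewrite -divgS ?dihedral_prod_sub // -(bigdprod_card defD).
rewrite -(bigdprod_card dihedral_bigdprodT).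
rewrite (eq_bigr (fun i => 2 * #|Ti i|)%N) => [|i _]; last first.
  by have [_ _ iTD _] := dihD i; rewrite -(Lagrange (sTiDi i)) iTD mulnC.
by rewrite big_split /= prod_nat_const mulnK // prodn_gt0.
Qed.

Lemma dihedral_prod_Ldiv2 : #|'Ldiv_2(T)| <= 2 ^ #|I|.
Proof.
apply: leq_trans (card_Ldiv_bigdprod dihedral_bigdprodT 2) _.
by rewrite -prod_nat_const leq_prod // => i _; apply: card_Ldiv_cyclic (cycTi i).
Qed.

End DihedralProduct.

Theorem proposition5p6 (gT : finGroupType) (s : nat)
    (Di Ti : 'I_s -> {group gT}) (D T L : {group gT})
    (hdih : forall i, dihedral_with (Di i) (Ti i))
    (hD : \big[dprod/1]_(i < s) Di i = D)
    (hT : T = \prod_(i < s) Ti i :> {set gT})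
    (hL : L \subset T) :
  #|[set H : {group gT} | (H \subset D) && (H :&: T == L)]|
    <= #|D| ^ 8 * 2 ^ (2 * s ^ 2).
Proof.
have sTD := dihedral_prod_sub hdih hD hT.
have iDT := dihedral_prod_index hdih hD hT; rewrite card_ord in iDT.
have leLdiv := dihedral_prod_Ldiv2 hdih hD hT; rewrite card_ord in leLdiv.
have := card_subgroups_meet_eq sTD (dihedral_prod_abelian hdih hD hT)
  (dihedral_prod_sqr hdih hD hT) hL (k := s).
rewrite iDT leqnn => /(_ isT) /leq_trans-> //.
have leq_exp a b e : a <= b -> a ^ e <= b ^ e.
  by move=> le_ab; elim: e => // e IHe; rewrite !expnS leq_mul.
apply: leq_trans (_ : #|T| * (2 * 2 ^ s * 2 ^ s) ^ s <= _).
  by rewrite leq_mul2l leq_exp ?orbT // leq_mul.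
have -> : ((2 * 2 ^ s * 2 ^ s) ^ s = 2 ^ s * 2 ^ (2 * s ^ 2))%N.
  by rewrite -expnS -expnD -expnM -expnD; congr (2 ^ _)%N; lia.
rewrite mulnA -iDT (Lagrange sTD) leq_mul2r -{1}[#|D|]expn1.
by rewrite leq_pexp2l ?cardG_gt0 ?orbT.
Qed.
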